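(* Let $\mathcal F_0:=\{f\in L^2(0,1):|f|<1\text{ a.e.}\}$ and, with $\mathrm{id}(y)=y$ on $(0,1)$, $\hat J(f):=\|f-\mathrm{id}\|_{L^2(0,1)}^2-\frac34\langle f-\mathrm{id},f+\mathrm{id}\rangle_{L^2(0,1)}^2$. Then $\hat J(f)>0$ for all $f\in\mathcal F_0\setminus\{\mathrm{id}\}$. *)

From HB Require Import structures.
From mathcomp Require Import all_boot all_order all_algebra.
From mathcomp Require Import all_classical all_reals all_analysis.
Unset Printing Implicit Defensive.
Import Order.TTheory GRing.Theory Num.Theory.
Local Open Scope classical_set_scope.
Local Open Scope ring_scope.

Definition I01 (R : realType) : set R := `]0%R, 1%R[.

Definition L2dist2_id (R : realType) (f : R -> R) : R :=
  Rintegral (lebesgue_measure (R:=R)) (I01 R) (fun y => (f y - y) ^+ 2).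

Definition inner_fmid_fpid (R : realType) (f : R -> R) : R :=
  Rintegral (lebesgue_measure (R:=R)) (I01 R) (fun y => (f y - y) * (f y + y)).

Definition Jhat (R : realType) (f : R -> R) : R :=
  L2dist2_id R f - (3%:R / 4%:R) * (inner_fmid_fpid R f) ^+ 2.

(* Write m2 = \int_0^1 f^2 and m1 = \int_0^1 y f(y) dy, so that
   a := ||f - id||^2 = m2 - 2 m1 + 1/3 and b := <f - id, f + id> = m2 - 1/3.
   It suffices to show |b| < t a + 1/(3t) for every t > 0: at t = |b|/(2a)
   this reads b^2 < b^2/2 + 2a/3, i.e. 3b^2/4 < a.
   The lower bound -b < t a + 1/(3t) holds because t a + 1/(3t) + b equals
   t^-1 (\int (t f + (1 - t) y)^2 + t a), and a > 0 unless f = id a.e.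
   The upper bound amounts to (t - 1) m2 - 2 t m1 + (t^2 + t + 1)/(3t) > 0.
   For t <= 1 it follows from
   1 + (t - 1) m2 - 2 t m1 = \int (1 - f)((1 - t)(1 + f) + 2 t y) > 0,
   as |f| < 1. For t > 1 put c = t/(t - 1): on (1/c, 1) we have
   c y > 1 > f, hence (f - c y)^2 > (c y - 1)^2, and integrating gives
   m2 - 2 c m1 + c^2/3 > \int_{1/c}^1 (c y - 1)^2 = (c - 1)^3/(3c),
   which is the claim divided by t - 1. *)

From HB Require Import structures.
From mathcomp Require Import all_boot all_order all_algebra.
From mathcomp Require Import all_classical all_reals all_analysis.
From mathcomp Require Import measurable_realfun ring lra.
Import Order.TTheory GRing.Theory Num.Theory.
Local Open Scope classical_set_scope.
Local Open Scope ring_scope.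

Lemma sqr_lt_of_forall_norm_lt {R : realFieldType} (a b : R) : 0 < a ->
  (forall t, 0 < t -> `|b| < t * a + (3 * t)^-1) -> 3 / 4 * b ^+ 2 < a.
Proof.
move=> a0 hb; have [->|b0] := eqVneq b 0; first by rewrite expr0n mulr0.
have nb0 : 0 < `|b| by rewrite normr_gt0.
have t0 : 0 < `|b| / (2 * a) by rewrite divr_gt0 // mulr_gt0.
have := hb _ t0; rewrite -(ltr_pM2l nb0) -expr2.
have -> : `|b| * (`|b| / (2 * a) * a + (3 * (`|b| / (2 * a)))^-1) =
    `|b| ^+ 2 / 2 + 2 / 3 * a.
  by field; rewrite !gt_eqF.
rewrite real_normK ?num_real //; lra.
Qed.

Section real_integrals.
Context {d : measure_display} {T : measurableType d} {R : realType}.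
Variable mu : {measure set T -> \bar R}.
Context {D : set T}.
Hypothesis mD : measurable D.

Lemma integrableD_EFin {g h : T -> R} :
  mu.-integrable D (EFin \o g) -> mu.-integrable D (EFin \o h) ->
  mu.-integrable D (EFin \o (g \+ h)).
Proof. by move=> ig ih; apply: eq_integrable (integrableD mD ig ih). Qed.

Lemma integrableB_EFin {g h : T -> R} :
  mu.-integrable D (EFin \o g) -> mu.-integrable D (EFin \o h) ->
  mu.-integrable D (EFin \o (g \- h)).
Proof. by move=> ig ih; apply: eq_integrable (integrableB mD ig ih). Qed.

Lemma integrableZl_EFin (k : R) {h : T -> R} : mu.-integrable D (EFin \o h) ->
  mu.-integrable D (EFin \o (fun x => k * h x)).
Proof. by move=> ih; apply: eq_integrable (integrableZl mD k ih). Qed.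

Lemma Rintegral_gt0 {h : T -> R} : mu.-integrable D (EFin \o h) ->
  (forall x, D x -> 0 <= h x) -> ~ {ae mu, forall x, D x -> h x = 0} ->
  0 < \int[mu]_(x in D) h x.
Proof.
move=> ih h0 hn0; rewrite lt_def Rintegral_ge0 // andbT; apply/eqP => ih0.
apply: hn0; have mh := measurable_int mu ih.
have /(ae_eq_integral_abs mu mD mh) : (\int[mu]_(x in D) `|(h x)%:E| = 0)%E.
  under eq_integral => x /set_mem Dx do rewrite gee0_abs ?lee_fin ?h0 //.
  by rewrite -(fineK (integrable_fin_num mD ih)) -/(Rintegral _ _ _) ih0.
by apply: filterS => x hx Dx; apply/EFin_inj/hx.
Qed.

Lemma Rintegral_ae_gt0 {h : T -> R} : mu.-integrable D (EFin \o h) ->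
  (0 < mu D)%E -> {ae mu, forall x, D x -> 0 < h x} ->
  0 < \int[mu]_(x in D) h x.
Proof.
move=> ih muD hpos; have mh := measurable_int mu ih.
have -> : \int[mu]_(x in D) h x = \int[mu]_(x in D) `|h x|.
  congr fine; apply: ae_eq_integral => //.
  - apply/measurable_EFinP; apply: measurableT_comp => //.
    exact/measurable_EFinP.
  - by apply: filterS hpos => x hx Dx; rewrite /= gtr0_norm // hx.
apply: Rintegral_gt0 => [|x _|hn0]; first exact: integrable_norm.
  exact: normr_ge0.
have : {ae mu, forall x, ~ D x}.
  apply: filterS2 hpos hn0 => x hx hn Dx.
  by move: (hx Dx); rewrite lt_def -normr_eq0 (hn Dx) eqxx.
move/(negligibleS (fun x Dx nDx => nDx Dx))/(negligibleP _ mD) => muD0.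
by move: muD; rewrite muD0 ltxx.
Qed.

End real_integrals.

Section interval_integrals.
Context {R : realType}.
Local Notation mu := (@lebesgue_measure R).

Lemma integrable_horner_subitv (p : {poly R}) {i : interval R} {a b : R} :
  [set` i] `<=` `[a, b] -> mu.-integrable [set` i] (EFin \o horner p).
Proof.
move=> iab; apply: (@integrableS _ _ _ mu `[a, b]) => //.
apply: continuous_compact_integrable; first exact: segment_compact.
by apply: continuous_in_subspaceT => x _; exact: continuous_horner.
Qed.

Lemma Rintegral_itv_oo_deriv_poly (p : {poly R}) (a b : R) : a < b ->
  \int[mu]_(x in `]a, b[) (p^`()).[x] = p.[b] - p.[a].
Proof.
move=> ab; rewrite Rintegral_itv_bndo_bndc; last first.
  exact/integrable_horner_subitv/subset_itvP/subset_itv_oo_cc.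
rewrite Rintegral_itv_obnd_cbnd; last first.
  exact/integrable_horner_subitv/subset_itvP/subset_itv_oc_cc.
have dF (q : {poly R}) : derivable_oo_LRcontinuous (horner q) a b.
  split; first by move=> x _; exact: derivable_horner.
  + exact/cvg_at_right_filter/continuous_horner.
  + exact/cvg_at_left_filter/continuous_horner.
rewrite /Rintegral (continuous_FTC2 (F := horner p)) //=.
- exact: derivable_oo_LRcontinuous_within (dF _).
- by move=> x _; rewrite -derivE.
Qed.

Let quadratic_prim (al be ga : R) : {poly R} :=
  al *: 'X + (be / 2) *: 'X^2 + (ga / 3) *: 'X^3.

Let quadratic_primE (al be ga y : R) :
  ((quadratic_prim al be ga)^`()).[y] = al + be * y + ga * y ^+ 2.
Proof.
rewrite /quadratic_prim !derivD !derivZ derivX !derivXn !hornerE /=.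
by field.
Qed.

Lemma integrable_quadratic_subitv (al be ga : R) {i : interval R} {a b : R} :
  [set` i] `<=` `[a, b] ->
  mu.-integrable [set` i] (EFin \o (fun y => al + be * y + ga * y ^+ 2)).
Proof.
move=> iab; move: (integrable_horner_subitv (quadratic_prim al be ga)^`() iab).
by apply: eq_integrable => // y _ /=; rewrite quadratic_primE.
Qed.

Lemma Rintegral_itv_oo_quadratic (al be ga a b : R) : a < b ->
  \int[mu]_(y in `]a, b[) (al + be * y + ga * y ^+ 2) =
  al * (b - a) + be / 2 * (b ^+ 2 - a ^+ 2) + ga / 3 * (b ^+ 3 - a ^+ 3).
Proof.
move=> ab; under eq_Rintegral do rewrite -quadratic_primE.
rewrite Rintegral_itv_oo_deriv_poly // /quadratic_prim !hornerE /=; ring.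
Qed.

Lemma lebesgue_measure_itv_oo_gt0 (a b : R) : a < b -> (0 < mu `]a, b[)%E.
Proof.
move=> ab; rewrite lebesgue_measure_itv /= lte_fin ab.
by rewrite -EFinD lte_fin subr_gt0.
Qed.

End interval_integrals.

Section unit_interval_moments.
Context {R : realType}.
Local Notation mu := (@lebesgue_measure R).
Local Notation D := (I01 R).
Variable f : R -> R.
Hypothesis mf : measurable_fun D f.
Hypothesis f2_int : mu.-integrable D (EFin \o (fun y => f y ^+ 2)).

(* The cast states measurability in the sigma-algebra carrying [mu], so that
   [mD] fixes the measurable type when passed to the generic lemmas. *)
Let mD : measurable (D : set (measurableTypeR R)) := measurable_itv _.

Let D01 : D `<=` `[0, 1].
Proof. exact/subset_itvP/subset_itv_oo_cc. Qed.

Lemma integrable_f : mu.-integrable D (EFin \o f).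
Proof.
apply: (le_integrable mD _ _ (integrableD_EFin mu mD f2_int
  (integrable_quadratic_subitv 1 0 0 D01))).
  exact/measurable_EFinP.
move=> y _; rewrite lee_fin /= !mul0r !addr0.
rewrite [X in _ <= X]ger0_norm ?addr_ge0 ?sqr_ge0 // -real_normK ?num_real //.
nra.
Qed.

Lemma integrable_idMf : mu.-integrable D (EFin \o (fun y => y * f y)).
Proof.
apply: (le_integrable mD _ _ integrable_f).
  by apply/measurable_EFinP; apply: measurable_funM.
move=> y /D01; rewrite /= in_itv /= => /andP[y0 y1].
by rewrite lee_fin normrM ler_piMl // ger0_norm.
Qed.

Local Notation m2 := (\int[mu]_(y in D) f y ^+ 2).
Local Notation m1 := (\int[mu]_(y in D) (y * f y)).

Definition moment_comb (c2 c1 al be ga : R) (y : R) :=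
  c2 * f y ^+ 2 + c1 * (y * f y) + (al + be * y + ga * y ^+ 2).

Lemma integrable_moment_comb c2 c1 al be ga :
  mu.-integrable D (EFin \o moment_comb c2 c1 al be ga).
Proof.
apply: (integrableD_EFin mu mD); last exact: integrable_quadratic_subitv D01.
apply: (integrableD_EFin mu mD); apply: (integrableZl_EFin mu mD).
- exact: f2_int.
- exact: integrable_idMf.
Qed.

Lemma Rintegral_moment_comb c2 c1 al be ga :
  \int[mu]_(y in D) moment_comb c2 c1 al be ga y =
  c2 * m2 + c1 * m1 + (al + be / 2 + ga / 3).
Proof.
have iZ2 := integrableZl_EFin mu mD c2 f2_int.
have iZ1 := integrableZl_EFin mu mD c1 integrable_idMf.
rewrite /moment_comb RintegralD //; last 2 first.
- exact: integrableD_EFin.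
- exact: integrable_quadratic_subitv D01.
rewrite [X in X + _ = _]RintegralD // !RintegralZl //.
  by rewrite /I01 Rintegral_itv_oo_quadratic ?ltr01 // expr1n expr0n /=; ring.
exact: integrable_idMf.
Qed.

Lemma integrable_sqr_subZ c :
  mu.-integrable D (EFin \o (fun y => (f y - c * y) ^+ 2)).
Proof.
move: (integrable_moment_comb 1 (- 2 * c) 0 0 (c ^+ 2)).
by apply: eq_integrable => // y _; rewrite /moment_comb /=; congr EFin; ring.
Qed.

Lemma Rintegral_sqr_subZ c :
  \int[mu]_(y in D) (f y - c * y) ^+ 2 = m2 - 2 * c * m1 + c ^+ 2 / 3.
Proof.
transitivity (\int[mu]_(y in D) moment_comb 1 (- 2 * c) 0 0 (c ^+ 2) y).
  by apply: eq_Rintegral => y _; rewrite /moment_comb; ring.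
by rewrite Rintegral_moment_comb; field.
Qed.

Lemma L2dist2_idE : L2dist2_id R f = m2 - 2 * m1 + 3^-1.
Proof.
rewrite /L2dist2_id; under eq_Rintegral do rewrite -[X in _ - X]mul1r.
by rewrite Rintegral_sqr_subZ; field.
Qed.

Lemma inner_fmid_fpidE : inner_fmid_fpid R f = m2 - 3^-1.
Proof.
transitivity (\int[mu]_(y in D) moment_comb 1 0 0 0 (-1) y).
  by apply: eq_Rintegral => y _; rewrite /moment_comb; ring.
by rewrite Rintegral_moment_comb; ring.
Qed.

Hypothesis f_neq_id : ~ {ae mu, forall y, D y -> f y = y}.

Lemma L2dist2_id_gt0 : 0 < L2dist2_id R f.
Proof.
apply: (Rintegral_gt0 mu mD) => [|y _|f_eq_id].
- by apply: eq_integrable (integrable_sqr_subZ 1) => // y _; rewrite /= mul1r.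
- exact: sqr_ge0.
- apply: f_neq_id; apply: filterS f_eq_id => y + Dy => /(_ Dy) /eqP.
  by rewrite sqrf_eq0 subr_eq0 => /eqP.
Qed.

Lemma moments_sqr_ge0 t :
  0 <= t ^+ 2 * m2 + 2 * t * (1 - t) * m1 + (1 - t) ^+ 2 / 3.
Proof.
have -> : t ^+ 2 * m2 + 2 * t * (1 - t) * m1 + (1 - t) ^+ 2 / 3 =
    \int[mu]_(y in D)
      moment_comb (t ^+ 2) (2 * t * (1 - t)) 0 0 ((1 - t) ^+ 2) y.
  by rewrite Rintegral_moment_comb; ring.
apply: Rintegral_ge0 => y _.
have -> : moment_comb (t ^+ 2) (2 * t * (1 - t)) 0 0 ((1 - t) ^+ 2) y =
    (t * f y + (1 - t) * y) ^+ 2 by rewrite /moment_comb; ring.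
exact: sqr_ge0.
Qed.

Hypothesis f_lt1 : {ae mu, forall y, D y -> `|f y| < 1}.

Lemma moments_upper_le1 t : 0 < t -> t <= 1 ->
  0 < 1 + (t - 1) * m2 - 2 * t * m1.
Proof.
move=> t0 t1.
have -> : 1 + (t - 1) * m2 - 2 * t * m1 =
    \int[mu]_(y in D) moment_comb (t - 1) (- 2 * t) (1 - t) (2 * t) 0 y.
  by rewrite Rintegral_moment_comb; field.
apply: (Rintegral_ae_gt0 mu mD (integrable_moment_comb _ _ _ _ _)).
  exact: lebesgue_measure_itv_oo_gt0.
apply: (filterS (F := almost_everywhere mu)) f_lt1 => y fy Dy.
move: (fy Dy) => /ltr_normlP[fyN1 fy1].
move: Dy; rewrite /I01 /= in_itv /= => /andP[y0 _].
have -> : moment_comb (t - 1) (- 2 * t) (1 - t) (2 * t) 0 y =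
    (1 - f y) * ((1 - t) * (1 + f y) + 2 * t * y).
  by rewrite /moment_comb; ring.
apply: mulr_gt0; first lra.
by apply: ltr_wpDl; [apply: mulr_ge0 | apply: mulr_gt0]; lra.
Qed.

Lemma moments_slope_gt1 c : 1 < c ->
  (c - 1) ^+ 3 / (3 * c) < m2 - 2 * c * m1 + c ^+ 2 / 3.
Proof.
move=> c1; have c0 : 0 < c by lra.
have s0 : 0 < c^-1 by rewrite invr_gt0.
have s1 : c^-1 < 1 by rewrite invf_lt1.
pose g y := (f y - c * y) ^+ 2.
pose q y := 1 + (- 2 * c) * y + c ^+ 2 * y ^+ 2.
have ig : mu.-integrable D (EFin \o g) := integrable_sqr_subZ c.
have Sc1 : `]c^-1, 1[ `<=` D by apply: subset_itv; rewrite bnd_simp ?(ltW s0).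
have igS : mu.-integrable `]c^-1, 1[ (EFin \o g).
  by apply: (@integrableS _ _ _ mu D) => //.
have iq : mu.-integrable `]c^-1, 1[ (EFin \o q).
  by apply: integrable_quadratic_subitv (subset_trans Sc1 D01).
have -> : m2 - 2 * c * m1 + c ^+ 2 / 3 =
    \int[mu]_(y in `]0, c^-1]) g y + \int[mu]_(y in `]c^-1, 1[) g y.
  rewrite -(Rintegral_itvB ig) ?bnd_simp ?(ltW s0) // [RHS]addrC subrK.
  exact/esym/Rintegral_sqr_subZ.
have -> : \int[mu]_(y in `]c^-1, 1[) g y =
    \int[mu]_(y in `]c^-1, 1[) (g y - q y) + (c - 1) ^+ 3 / (3 * c).
  rewrite RintegralB // Rintegral_itv_oo_quadratic // expr1n.
  by rewrite exprVn; field; rewrite gt_eqF.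
apply: ltr_wpDl; first by apply: Rintegral_ge0 => y _; exact: sqr_ge0.
have mS := @measurable_itv R `]c^-1, 1[.
rewrite ltrDr; apply: (Rintegral_ae_gt0 mu mS (integrableB_EFin mu mS igS iq)).
- exact: lebesgue_measure_itv_oo_gt0.
apply: (filterS (F := almost_everywhere mu)) f_lt1 => y fy Sy.
move: (fy (Sc1 _ Sy)) => /ltr_normlP[_ fy1].
move: Sy; rewrite /= in_itv /= => /andP[sy _].
have cy1 : 1 < c * y by rewrite -(mulfV (lt0r_neq0 c0)) ltr_pM2l.
have -> : g y - q y = (1 - f y) * ((c * y - 1) + (c * y - f y)).
  by rewrite /g /q; ring.
by apply: mulr_gt0; lra.
Qed.

Lemma moments_upper t : 0 < t ->
  0 < (t - 1) * m2 - 2 * t * m1 + (t ^+ 2 + t + 1) / (3 * t).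
Proof.
move=> t0; have [t1|t1] := leP t 1.
  have := moments_upper_le1 t t0 t1.
  have : 0 <= (t - 1) ^+ 2 / (3 * t).
    by rewrite divr_ge0 ?sqr_ge0 // ltW ?mulr_gt0.
  have -> : (t ^+ 2 + t + 1) / (3 * t) = 1 + (t - 1) ^+ 2 / (3 * t).
    by field; rewrite lt0r_neq0.
  lra.
have tm1 : 0 < t - 1 by rewrite subr_gt0.
have c1 : 1 < t / (t - 1) by rewrite ltr_pdivlMr // mul1r; lra.
have := moments_slope_gt1 _ c1; set c := t / (t - 1); rewrite -subr_gt0 => h.
have -> : (t - 1) * m2 - 2 * t * m1 + (t ^+ 2 + t + 1) / (3 * t) =
    (t - 1) * (m2 - 2 * c * m1 + c ^+ 2 / 3 - (c - 1) ^+ 3 / (3 * c)).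
  by rewrite /c; field; rewrite !lt0r_neq0.
exact: mulr_gt0.
Qed.

Lemma inner_fmid_fpid_lt t : 0 < t ->
  `|inner_fmid_fpid R f| < t * L2dist2_id R f + (3 * t)^-1.
Proof.
move=> t0; have a0 := L2dist2_id_gt0; rewrite L2dist2_idE in a0 *.
rewrite inner_fmid_fpidE ltr_norml; apply/andP; split.
  rewrite ltrNl -subr_gt0 -(pmulr_rgt0 _ t0).
  have -> : t * (t * (m2 - 2 * m1 + 3^-1) + (3 * t)^-1 - - (m2 - 3^-1)) =
      (t ^+ 2 * m2 + 2 * t * (1 - t) * m1 + (1 - t) ^+ 2 / 3) +
      t * (m2 - 2 * m1 + 3^-1).
    by field; rewrite lt0r_neq0.
  exact: ltr_wpDl (moments_sqr_ge0 t) (mulr_gt0 t0 a0).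
rewrite -subr_gt0.
have -> : t * (m2 - 2 * m1 + 3^-1) + (3 * t)^-1 - (m2 - 3^-1) =
    (t - 1) * m2 - 2 * t * m1 + (t ^+ 2 + t + 1) / (3 * t).
  by field; rewrite lt0r_neq0.
exact: moments_upper.
Qed.

End unit_interval_moments.

Theorem lemma4p4 (R : realType) (f : R -> R)
  (fmeas : measurable_fun (I01 R) f)
  (fL2 : (lebesgue_measure (R:=R)).-integrable (I01 R) (fun y => ((f y) ^+ 2)%:E))
  (fbnd : {ae lebesgue_measure (R:=R), forall y, I01 R y -> `|f y| < 1})
  (fneq : ~ {ae lebesgue_measure (R:=R), forall y, I01 R y -> f y = y}) :
  0 < Jhat R f.
Proof.
rewrite /Jhat subr_gt0; apply: sqr_lt_of_forall_norm_lt.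
- exact: L2dist2_id_gt0 fmeas fL2 fneq.
- exact: inner_fmid_fpid_lt fmeas fL2 fneq fbnd.
Qed.
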